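(* Let $G$ be a finite simple graph with edge weight function $w$ and vertex weight function $w_1$, let $\theta$ be a real number, and let $u$ be a $(\theta,w,w_1)$-special vertex of $G$. Then the degree of $u$ is at least two.
   Context: An edge weight function $w$ assigns a nonzero complex number to each edge; a vertex weight function $w_1$ assigns a real number (possibly $0$) to each vertex; subgraphs carry restricted weights; $G\setminus u$ deletes $u$ and its incident edges. For $A\subseteq E(G)$, $w(A)=\prod_{e\in A}w(e)$. $\mu_w(G,x)=\sum_{M}(-1)^{|M|}|w(M)|^2x^{n-2|M|}$ over all matchings $M$ (including empty). $\eta_{(w,w_1)}(G,x)=\sum_{S\subseteq V(G)}(-1)^{|V(G)\setminus S|}\big(\prod_{y\in V(G)\setminus S}w_1(y)\big)\mu_w(G[S],x)$ with $G[S]$ the induced subgraph; $\mu_w,\eta_{(w,w_1)}$ of the empty graph equal $1$. $\mathrm{mult}(\theta,H)$ is the multiplicity of $\theta$ as a root of $\eta_{(w,w_1)}(H,x)$ ($0$ if not a root). A vertex $v$ of $H$ is $(\theta,w,w_1)$-essential if $\mathrm{mult}(\theta,H\setminus v)=\mathrm{mult}(\theta,H)-1$; $v$ is $(\theta,w,w_1)$-special if it is not essential but is adjacent to some essential vertex. *)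

(* Complex numbers are R[i] = complex R for a real closed
   field R (the paper's case is R = the reals). *)
From HB Require Import structures.
From mathcomp Require Import all_boot all_order all_algebra.
From mathcomp Require Import complex.
Set Implicit Arguments. Unset Strict Implicit. Unset Printing Implicit Defensive.
Import Order.TTheory GRing.Theory Num.Theory.
Local Open Scope ring_scope.
Local Open Scope complex_scope.

Section EtaPoly.
Variables (R : rcfType) (T : finType).
Definition simple_graph (g : rel T) := symmetric g /\ irreflexive g.

Definition is_edge (g : rel T) (e : {set T}) :=
  [exists x, exists y, g x y && (e == [set x; y])].

Definition matching_in (g : rel T) (S : {set T}) (M : {set {set T}}) :=
  [forall e in M, is_edge g e && (e \subset S)] &&
  [forall e1 in M, forall e2 in M, (e1 != e2) ==> [disjoint e1 & e2]].

Definition mu_poly (g : rel T) (w : {set T} -> R[i]) (S : {set T}) : {poly R[i]} :=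
  \sum_(M : {set {set T}} | matching_in g S M)
     ((-1) ^+ #|M| * `|\prod_(e in M) w e| ^+ 2)%:P * 'X^(#|S| - 2 * #|M|).

Definition eta_poly (g : rel T) (w : {set T} -> R[i]) (w1 : T -> R)
    (S : {set T}) : {poly R[i]} :=
  \sum_(A : {set T} | A \subset S)
     ((-1) ^+ #|S :\: A| * (\prod_(y in S :\: A) real_complex _ (w1 y)))%:P
       * mu_poly g w A.

Definition mult (g : rel T) w w1 (theta : R) (S : {set T}) : nat :=
  mup (real_complex _ theta) (eta_poly g w w1 S).

Definition essential g w w1 theta (S : {set T}) (v : T) :=
  (v \in S) && (mult g w w1 theta (S :\ v) + 1 == mult g w w1 theta S)%N.

Definition special g w w1 theta (S : {set T}) (u : T) :=
  (u \in S) && ~~ essential g w w1 theta S u &&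
  [exists v in S, g u v && essential g w w1 theta S v].

Definition degree (g : rel T) (u : T) : nat := #|[set y | g u y]|.
End EtaPoly.

(* Splitting the matchings of G[S] according to whether they cover a vertex u gives
   eta(S) = (x - w1 u) eta(S - u) - sum_(v ~ u) |w uv|^2 eta(S - u - v).
   Hence the Wronskian eta(S - u) eta(S)' - eta(S) eta(S - u)' is eta(S - u)^2 plus a
   positive combination of Wronskians of smaller sets; as all eta's are real, near theta it
   is (x - theta)^l times a polynomial positive at theta, with l <= 2 mult(theta, S - u).
   Since (x - theta)^(mult(S) + mult(S - u) - 1) divides it, this gives the interlacing
   mult(theta, S) <= mult(theta, S - u) + 1.
   If the special vertex u had degree at most one, its essential neighbour v would be its
   only neighbour, so eta(G) = (x - w1 u) eta(G - u) - c eta(G - u - v) with c > 0 and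
   eta(G - v) = (x - w1 u) eta(G - u - v).  Essentiality of v gives
   mult(G - u - v) < mult(G); non-essentiality of u and interlacing give
   mult(G) <= mult(G - u), so (x - theta)^mult(G) divides c eta(G - u - v), which is absurd. *)

From HB Require Import structures.
From mathcomp Require Import all_boot all_order all_algebra.
From mathcomp Require Import complex ring zify.
Set Implicit Arguments. Unset Strict Implicit. Unset Printing Implicit Defensive.
Import Order.TTheory GRing.Theory Num.Theory.
Local Open Scope ring_scope.

Lemma setU1K_eq (T : finType) (a : T) (B : {set T}) : ((a |: B) :\ a == B) = (a \notin B).
Proof. by apply/eqP/idP => [<- | /setU1K //]; rewrite setD11. Qed.

Section Matchings.
Variables (R : rcfType) (T : finType) (g : rel T) (w : {set T} -> R[i]).
Hypotheses (gsym : symmetric g) (girr : irreflexive g).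

Lemma is_edge_set2 u v : is_edge g [set u; v] = g u v.
Proof.
apply/idP/idP => [|guv]; last first.
  by apply/existsP; exists u; apply/existsP; exists v; rewrite guv eqxx.
case/existsP=> a /existsP[b /andP[gab /eqP uv_ab]].
have au : a \in [set u; v] by rewrite uv_ab !inE eqxx.
have bv : b \in [set u; v] by rewrite uv_ab !inE eqxx orbT.
move: au bv gab; rewrite !inE => /orP[]/eqP-> /orP[]/eqP->;
  by rewrite ?girr // gsym.
Qed.

Lemma is_edge_memP e x :
  is_edge g e -> x \in e -> exists2 y, g x y & e = [set x; y].
Proof.
case/existsP=> a /existsP[b /andP[gab /eqP->]].
by rewrite !inE => /orP[]/eqP->; [exists b | exists a; rewrite 1?gsym // setUC].
Qed.

Lemma card_edge e : is_edge g e -> #|e| = 2%N.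
Proof.
case/existsP=> a /existsP[b /andP[gab /eqP->]].
by rewrite cards2; case: eqP gab => [->|]; rewrite ?girr.
Qed.

Lemma matching_card S M : matching_in g S M -> (2 * #|M| <= #|S|)%N.
Proof.
move=> /andP[/forall_inP edgeM /forall_inP disjM].
have triM : trivIset M.
  apply/trivIsetP => e1 e2 e1M e2M ne12.
  by have /forall_inP/(_ e2 e2M) := disjM e1 e1M; rewrite ne12.
have coverS : cover M \subset S by apply/bigcupsP => e /edgeM /andP[].
rewrite mulnC -sum_nat_const -(eq_bigr _ (fun e eM => card_edge (andP (edgeM e eM)).1)).
by rewrite (eqP triM) subset_leq_card.
Qed.

Lemma matching_edge_uniq A M u x y : matching_in g A M ->
  [set u; x] \in M -> [set u; y] \in M -> x = y.
Proof.
move=> /andP[/forall_inP edgeM /forall_inP disjM] exM eyM.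
have gux : g u x by rewrite -is_edge_set2; case/andP: (edgeM _ exM).
have guy : g u y by rewrite -is_edge_set2; case/andP: (edgeM _ eyM).
have [exy | nexy] := eqVneq [set u; x] [set u; y].
  have : x \in [set u; y] by rewrite -exy !inE eqxx orbT.
  by rewrite !inE => /orP[/eqP xu | /eqP //]; rewrite xu girr in gux.
have /forall_inP/(_ _ eyM) := disjM _ exM; rewrite nexy /= => /disjointFr.
by move=> /(_ u); rewrite !inE eqxx => /(_ isT).
Qed.

(* Defaults to [u] when [M] does not cover [u]. *)
Definition partner (M : {set {set T}}) u := odflt u [pick v | [set u; v] \in M].

Lemma partner_mem A M u : matching_in g A M -> [exists e in M, u \in e] ->
  [set u; partner M u] \in M.
Proof.
move=> /andP[/forall_inP edgeM _] /exists_inP[e eM ue].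
have [v _ ev] := is_edge_memP (andP (edgeM e eM)).1 ue.
by rewrite /partner; case: pickP => [v' -> // | /(_ v)]; rewrite -ev eM.
Qed.

Definition mu_term (A : {set T}) (M : {set {set T}}) : {poly R[i]} :=
  ((-1) ^+ #|M| * `|\prod_(e in M) w e| ^+ 2)%:P * 'X^(#|A| - 2 * #|M|).

Lemma mu_polyE A : mu_poly g w A = \sum_(M | matching_in g A M) mu_term A M.
Proof. by []. Qed.

Lemma matching_in_setD1 (A : {set T}) u M :
  matching_in g A M && ~~ [exists e in M, u \in e] = matching_in g (A :\ u) M.
Proof.
rewrite /matching_in andbAC; congr (_ && _).
apply/andP/forall_inP => [[/forall_inP edgeM /exists_inP uM] e eM | edgeM].
  have /andP[-> eA] := edgeM e eM; rewrite subsetD1 eA.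
  by apply/negP => ue; apply: uM; exists e.
split.
  apply/forall_inP => e /edgeM /andP[-> /subsetP eA].
  by apply/subsetP => x /eA /setD1P[].
by apply/exists_inP => -[e /edgeM /andP[_]]; rewrite subsetD1 => /andP[_ /negP].
Qed.

Lemma mu_poly_avoid (A : {set T}) u : u \in A ->
  \sum_(M | matching_in g A M && ~~ [exists e in M, u \in e]) mu_term A M
  = 'X * mu_poly g w (A :\ u).
Proof.
move=> uA; rewrite mu_polyE mulr_sumr.
apply: eq_big => [M | M]; rewrite matching_in_setD1 // => /matching_card le2M.
by rewrite /mu_term (cardsD1 u A) uA add1n subSn // (exprS 'X) mulrCA.
Qed.

Lemma matching_in_setU1 (A : {set T}) u v M : g u v -> u \in A -> v \in A ->
  matching_in g A ([set u; v] |: M) && ([set u; v] \notin M)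
  = matching_in g (A :\ u :\ v) M.
Proof.
move=> guv uA vA; set e := [set u; v].
have ue : u \in e by rewrite !inE eqxx.
have ve : v \in e by rewrite !inE eqxx orbT.
apply/idP/idP.
  case/andP => /andP[/forall_inP edgeM /forall_inP disjM] eM.
  apply/andP; split; apply/forall_inP => e1 e1M; last first.
    apply/forall_inP => e2 e2M.
    exact: (forall_inP (disjM e1 (setU1r e e1M)) e2 (setU1r e e2M)).
  have /andP[-> e1A] := edgeM e1 (setU1r e e1M).
  have /forall_inP/(_ e1 (setU1r e e1M)) := disjM e (setU11 e M).
  have -> /= : e != e1 by apply: contraNneq eM => ->.
  by move=> /disjointFr dis; rewrite !subsetD1 e1A (dis u) ?(dis v).
case/andP => /forall_inP edgeM /forall_inP disjM.
have eM : e \notin M.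
  by apply: contraL ue => /edgeM /andP[_]; rewrite !subsetD1 => /andP[/andP[_ ->]].
have edge'M e1 : e1 \in M -> [/\ is_edge g e1, e1 \subset A, u \notin e1 & v \notin e1].
  by move=> /edgeM /andP[-> ]; rewrite !subsetD1 => /andP[/andP[-> ->] ->].
have disj_e e1 : e1 \in M -> [disjoint e & e1].
  by case/edge'M => _ _ ue1 ve1; rewrite disjoints_subset subUset !sub1set !inE ue1 ve1.
rewrite eM andbT; apply/andP; split.
  apply/forall_inP => e1 /setU1P[-> | /edge'M[-> -> _ _] //].
  by rewrite is_edge_set2 guv subUset !sub1set uA vA.
apply/forall_inP => e1 /setU1P[-> | e1M]; apply/forall_inP => e2 /setU1P[-> | e2M].
- by rewrite eqxx.
- by rewrite disj_e ?implybT.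
- by rewrite disjoint_sym disj_e ?implybT.
- exact: (forall_inP (disjM e1 e1M)).
Qed.

Lemma mu_term_setU1 (A : {set T}) u v (M : {set {set T}}) :
  u \in A -> v \in A -> v != u -> [set u; v] \notin M ->
  mu_term A ([set u; v] |: M)
  = - ((`|w [set u; v]| ^+ 2)%:P * mu_term (A :\ u :\ v) M).
Proof.
move=> uA vA vu eM.
rewrite /mu_term cardsU1 eM big_setU1 //= normrM exprMn.
rewrite (cardsD1 u A) uA (cardsD1 v (A :\ u)) !inE vu vA /=.
have -> : (1 + (1 + #|A :\ u :\ v|) - 2 * (1 + #|M|) = #|A :\ u :\ v| - 2 * #|M|)%N.
  by rewrite mulnDr addnA subnDl.
rewrite add1n exprS !polyCM polyCN polyC1.
by move: (_%:P) (_%:P) (_%:P) ('X^_) => a b c d; ring.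
Qed.

Lemma mu_poly_cover (A : {set T}) u v : u \in A -> v \in A -> g u v ->
  \sum_(M | matching_in g A M && ([set u; v] \in M)) mu_term A M
  = - ((`|w [set u; v]| ^+ 2)%:P * mu_poly g w (A :\ u :\ v)).
Proof.
move=> uA vA guv; set e := [set u; v].
have vu : v != u by apply: contraTneq guv => ->; rewrite girr.
rewrite mu_polyE mulr_sumr -sumrN.
rewrite (reindex_onto (fun M => e |: M) (fun M => M :\ e)) /=; last first.
  by move=> M /andP[_ eM]; rewrite setD1K.
apply: eq_big => [M | M]; first by rewrite setU11 andbT setU1K_eq matching_in_setU1.
by rewrite setU11 andbT setU1K_eq => /andP[_ eM]; rewrite mu_term_setU1.
Qed.

Lemma mu_poly_rec (A : {set T}) u : u \in A ->
  mu_poly g w A = 'X * mu_poly g w (A :\ u)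
    - \sum_(v in A :\ u | g u v) (`|w [set u; v]| ^+ 2)%:P * mu_poly g w (A :\ u :\ v).
Proof.
move=> uA; rewrite mu_polyE (bigID (fun M : {set {set T}} => [exists e in M, u \in e])) /=.
rewrite mu_poly_avoid // addrC; congr (_ + _); rewrite -sumrN.
rewrite (partition_big (partner^~ u) (fun v => (v \in A :\ u) && g u v)); last first.
  move=> M /andP[matM coverM]; have eM := partner_mem matM coverM.
  have /andP[] := forall_inP (andP matM).1 _ eM.
  rewrite is_edge_set2 subUset !sub1set => gup /andP[_ pA].
  by rewrite !inE pA gup !andbT; apply: contraTneq gup => ->; rewrite girr.
apply: eq_bigr => v /andP[/setD1P[vu vA] guv]; rewrite -mu_poly_cover //.
apply: eq_bigl => M; apply/andP/andP => [[/andP[matM coverM] /eqP <-] | [matM eM]].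
  by split=> //; exact: partner_mem matM coverM.
have coverM : [exists e in M, u \in e].
  by apply/exists_inP; exists [set u; v]; rewrite ?inE ?eqxx.
split; first by rewrite matM.
exact/eqP/(matching_edge_uniq matM (partner_mem matM coverM) eM).
Qed.

End Matchings.

Lemma conj_real_complex (R : rcfType) (x : R) :
  Num.conj (real_complex R x) = real_complex R x.
Proof. exact: conjc_real. Qed.

Section Eta.
Variables (R : rcfType) (T : finType) (g : rel T) (w : {set T} -> R[i]) (w1 : T -> R).
Hypotheses (gsym : symmetric g) (girr : irreflexive g).
Local Notation eta := (eta_poly g w w1).

Definition eta_coef (S A : {set T}) : {poly R[i]} :=
  ((-1) ^+ #|S :\: A| * \prod_(y in S :\: A) real_complex R (w1 y))%:P.

Lemma eta_polyE S : eta S = \sum_(A : {set T} | A \subset S) eta_coef S A * mu_poly g w A.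
Proof. by []. Qed.

Lemma sum_eta_coef_mem (S : {set T}) v (F : {set T} -> {poly R[i]}) : v \in S ->
  \sum_(A : {set T} | (A \subset S) && (v \in A)) eta_coef S A * F (A :\ v)
  = \sum_(B : {set T} | B \subset S :\ v) eta_coef (S :\ v) B * F B.
Proof.
move=> vS; rewrite (reindex_onto (fun B => v |: B) (fun A => A :\ v)) /=; last first.
  by move=> A /andP[_ vA]; rewrite setD1K.
apply: eq_big => [B | B].
  by rewrite setU11 andbT setU1K_eq subsetD1 subUset sub1set vS.
rewrite setU1K_eq => /andP[_ vB]; rewrite setU1K // /eta_coef.
suff -> : S :\: (v |: B) = S :\ v :\: B by [].
by apply/setP => x; rewrite !inE negb_or; case: (x == v); case: (x \in B).
Qed.

Lemma sum_eta_coef_notin (S : {set T}) v (F : {set T} -> {poly R[i]}) : v \in S ->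
  \sum_(A : {set T} | (A \subset S) && (v \notin A)) eta_coef S A * F A
  = - (real_complex R (w1 v))%:P *
      \sum_(B : {set T} | B \subset S :\ v) eta_coef (S :\ v) B * F B.
Proof.
move=> vS; rewrite mulr_sumr; apply: eq_big => [A | A]; first by rewrite subsetD1.
move=> /andP[_ vA]; rewrite mulrA /eta_coef; congr (_ * _).
have -> : S :\: A = v |: (S :\ v :\: A).
  by apply/setP => x; rewrite !inE; case: eqVneq => [->|]; rewrite ?vA ?vS //=.
have vSA : v \notin S :\ v :\: A by rewrite !inE eqxx /= andbF.
rewrite cardsU1 vSA big_setU1 //= add1n exprS !polyCM polyCN polyC1.
by move: (_%:P) (_%:P) (_%:P) => a b c; ring.
Qed.

Lemma eta_poly_rec (S : {set T}) u : u \in S ->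
  eta S = ('X - (real_complex R (w1 u))%:P) * eta (S :\ u)
    - \sum_(v in S :\ u | g u v) (`|w [set u; v]| ^+ 2)%:P * eta (S :\ u :\ v).
Proof.
move=> uS; set S' := S :\ u.
pose nbr_sum (B : {set T}) :=
  \sum_(v in B | g u v) (`|w [set u; v]| ^+ 2)%:P * mu_poly g w (B :\ v).
have expand_u (A : {set T}) :
    u \in A -> mu_poly g w A = 'X * mu_poly g w (A :\ u) - nbr_sum (A :\ u).
  move=> uA; rewrite (mu_poly_rec w gsym girr uA) /nbr_sum.
  by congr (_ - _); apply: eq_bigl => v; rewrite !inE andbA.
have nbr_sum_eta : \sum_(B : {set T} | B \subset S') eta_coef S' B * nbr_sum B
    = \sum_(v in S' | g u v) (`|w [set u; v]| ^+ 2)%:P * eta (S' :\ v).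
  under eq_bigr do rewrite mulr_sumr.
  rewrite (exchange_big_dep (fun v => (v \in S') && g u v)) /=; last first.
    by move=> B v sB /andP[vB ->]; rewrite andbT (subsetP sB).
  apply: eq_bigr => v /andP[vS' guv]; rewrite eta_polyE -sum_eta_coef_mem // mulr_sumr.
  by apply: eq_big => [B | B _]; rewrite ?guv ?andbT // mulrCA.
rewrite eta_polyE (bigID (fun A : {set T} => u \in A)) /=.
rewrite (eq_bigr (fun A => eta_coef S A * ('X * mu_poly g w (A :\ u) - nbr_sum (A :\ u))));
  last by move=> A /andP[_ uA]; rewrite expand_u.
rewrite (sum_eta_coef_mem (fun B => 'X * mu_poly g w B - nbr_sum B) uS).
rewrite sum_eta_coef_notin // -eta_polyE -/S'.
rewrite (eq_bigr (fun B =>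
    'X * (eta_coef S' B * mu_poly g w B) - eta_coef S' B * nbr_sum B));
  last by move=> B _; rewrite mulrBr mulrCA.
rewrite sumrB -mulr_sumr -eta_polyE nbr_sum_eta.
by move: (eta S') (\sum_(v in S' | g u v) _) => p q; ring.
Qed.

Lemma mu_poly_set0 : mu_poly g w set0 = 1.
Proof.
rewrite mu_polyE (big_pred1 set0) => [|M] /=.
  by rewrite /mu_term !cards0 big_set0 normr1 expr1n !mulr1 expr0.
apply/andP/eqP => [[/forall_inP edgeM _] | ->]; last first.
  by split; apply/forall_inP => e; rewrite inE.
apply/setP => e; rewrite inE; apply/negP => /edgeM /andP[/(card_edge girr)].
by rewrite subset0 => + /eqP e0; rewrite e0 cards0.
Qed.

Lemma eta_poly_set0 : eta set0 = 1.
Proof.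
rewrite eta_polyE (big_pred1 set0) => [|A] /=; last by rewrite subset0.
by rewrite mu_poly_set0 /eta_coef setDv cards0 big_set0 mulr1 expr0 mulr1.
Qed.

Lemma mu_poly_real A : map_poly Num.conj (mu_poly g w A) = mu_poly g w A.
Proof.
rewrite rmorph_sum; apply: eq_bigr => M _.
by rewrite rmorphM /= map_polyC map_polyXn /= rmorphM /= !rmorphXn /= rmorphN1 conj_normC.
Qed.

Lemma eta_poly_real S : map_poly Num.conj (eta S) = eta S.
Proof.
rewrite rmorph_sum; apply: eq_bigr => A _.
rewrite rmorphM /= mu_poly_real map_polyC /= rmorphM /= rmorphXn rmorphN1 rmorph_prod /=.
by under eq_bigr do rewrite conj_real_complex.
Qed.

Lemma eta_poly_monic_size S : eta S \is monic /\ size (eta S) = #|S|.+1.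
Proof.
have [n] := ubnP #|S|; elim: n S => // n IH S /ltnSE-leSn.
have [->|[u uS]] := set_0Vmem S.
  by rewrite eta_poly_set0 monic1 size_poly1 cards0.
have cardS : #|S| = #|S :\ u|.+1 by rewrite (cardsD1 u S) uS.
have ltS'n : (#|S :\ u| < n)%N by rewrite -cardS.
have [monS' sizeS'] := IH _ ltS'n.
rewrite (eta_poly_rec uS).
set p := _ * eta (S :\ u); set q := \sum_(v in _ | _) _.
have monp : p \is monic by rewrite monicMl // monicXsubC.
have sizep : size p = #|S|.+1.
  by rewrite size_monicM ?monicXsubC ?monic_neq0 // sizeS' size_XsubC cardS.
have sizeq : (size q < size p)%N.
  rewrite sizep; apply: leq_ltn_trans (size_sum _ _ _) _; rewrite ltnS.
  apply/bigmax_leqP => v /andP[vS' _]; rewrite mul_polyC.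
  have cardS' : #|S :\ u| = #|S :\ u :\ v|.+1 by rewrite (cardsD1 v (S :\ u)) vS'.
  have ltS''n : (#|S :\ u :\ v| < n)%N.
    by apply: leq_trans leSn; rewrite cardS cardS'.
  have [_ sizeS''] := IH _ ltS''n.
  by apply: leq_trans (size_scale_leq _ _) _; rewrite sizeS'' cardS cardS'.
have sizeNq : (size (- q) < size p)%N by rewrite size_polyN.
by rewrite monicE lead_coefDl // (monicP monp) size_polyDl.
Qed.

Lemma eta_poly_neq0 S : eta S != 0.
Proof. exact: monic_neq0 (eta_poly_monic_size S).1. Qed.

End Eta.

Lemma dvdp_deriv (F : fieldType) (c : F) n (p : {poly F}) :
  ('X - c%:P) ^+ n %| p -> ('X - c%:P) ^+ n.-1 %| p^`().
Proof.
case: n => [_|n]; first by rewrite /= expr0 dvd1p.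
case/dvdpP => q ->; rewrite derivM deriv_exp derivXsubC mul1r /=.
apply: dvdp_add; first by apply: dvdp_mull; rewrite exprS dvdp_mulIr.
by apply: dvdp_mull; rewrite -mulr_natr dvdp_mulIl.
Qed.

Section Germs.
Variables (C : numClosedFieldType) (z : C).
Local Notation Xz := ('X - z%:P).

(* [pos_germ k p]: [p] vanishes at [z] to order exactly [k] and, for real [p]
   and [z], is positive immediately to the right of [z]. *)
Definition pos_germ (k : nat) (p : {poly C}) := exists2 q, p = q * Xz ^+ k & 0 < q.[z].

Definition nonneg_germ (p : {poly C}) := p = 0 \/ exists k, pos_germ k p.

Lemma pos_germ_neq0 k p : pos_germ k p -> p != 0.
Proof.
case=> q -> qz_gt0; rewrite mulf_neq0 ?expf_neq0 ?polyXsubC_eq0 //.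
by apply: contraTneq qz_gt0 => ->; rewrite horner0 ltxx.
Qed.

Lemma mup_pos_germ k p : pos_germ k p -> mup z p = k.
Proof.
by case=> q -> qz_gt0; rewrite mupMr ?mup_XsubCX ?eqxx // /root gt_eqF.
Qed.

Lemma pos_germD k p r : pos_germ k p -> nonneg_germ r ->
  exists2 l, (l <= k)%N & pos_germ l (p + r).
Proof.
move=> [q -> qz_gt0] [-> | [l [q' -> q'z_gt0]]].
  by exists k => //; exists q; rewrite ?addr0.
have Xz_at_z n : (Xz ^+ n).[z] = (n == 0)%:R by rewrite horner_exp hornerXsubC subrr expr0n.
have [lekl | ltlk] := leqP k l.
  exists k => //; exists (q + q' * Xz ^+ (l - k)).
    by rewrite mulrDl -mulrA -exprD subnK.
  rewrite hornerD hornerM Xz_at_z; case: eqP => _; rewrite ?mulr1 ?mulr0 ?addr0 //.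
  exact: addr_gt0.
exists l; first exact: ltnW.
exists (q * Xz ^+ (k - l) + q'); first by rewrite mulrDl -mulrA -exprD subnK // ltnW.
by rewrite hornerD hornerM Xz_at_z subn_eq0 leqNgt ltlk mulr0 add0r.
Qed.

Lemma nonneg_germD p r : nonneg_germ p -> nonneg_germ r -> nonneg_germ (p + r).
Proof.
case=> [-> | [k pk]] nr; first by rewrite add0r.
by right; have [l _ prl] := pos_germD pk nr; exists l.
Qed.

Lemma nonneg_germ_sum (I : finType) (P : pred I) (F : I -> {poly C}) :
  (forall i, P i -> nonneg_germ (F i)) -> nonneg_germ (\sum_(i | P i) F i).
Proof. by move=> nF; apply: big_ind => //; [left | exact: nonneg_germD]. Qed.

Lemma nonneg_germZ c p : 0 < c -> nonneg_germ p -> nonneg_germ (c%:P * p).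
Proof.
move=> c_gt0 [-> | [k [q -> qz_gt0]]]; first by left; rewrite mulr0.
by right; exists k, (c%:P * q); rewrite ?mulrA // hornerCM mulr_gt0.
Qed.

Lemma pos_germ_sqr p : Num.conj z = z -> map_poly Num.conj p = p -> p != 0 ->
  pos_germ (2 * mup z p) (p * p).
Proof.
move=> z_real p_real p_neq0.
have [m [q /implyP/(_ p_neq0) qz_neq0 Ep]] := multiplicity_XsubC p z.
have Xm_neq0 : Xz ^+ m != 0 by rewrite expf_neq0 // polyXsubC_eq0.
have q_real : map_poly Num.conj q = q.
  apply: (mulIf Xm_neq0); rewrite -Ep -{1}p_real Ep rmorphM rmorphXn /=.
  by rewrite rmorphB /= map_polyX map_polyC /= z_real.
have qz_real : Num.conj q.[z] = q.[z] by rewrite -horner_map /= q_real z_real.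
exists (q * q); last by rewrite hornerM -{2}qz_real mul_conjC_gt0.
by rewrite Ep mupMr // mup_XsubCX eqxx mul2n -addnn exprD mulrACA.
Qed.

End Germs.

Section Interlacing.
Variables (R : rcfType) (T : finType) (g : rel T) (w : {set T} -> R[i]) (w1 : T -> R).
Variable theta : R.
Hypotheses (gsym : symmetric g) (girr : irreflexive g).
Hypothesis w_neq0 : forall e, is_edge g e -> w e != 0.
Local Notation eta := (eta_poly g w w1).
Local Notation z := (real_complex R theta).

Definition eta_wronskian (S : {set T}) u :=
  eta (S :\ u) * (eta S)^`() - eta S * (eta (S :\ u))^`().

Lemma eta_wronskian_rec (S : {set T}) u : u \in S ->
  eta_wronskian S u = eta (S :\ u) * eta (S :\ u)
    + \sum_(v in S :\ u | g u v) (`|w [set u; v]| ^+ 2)%:P * eta_wronskian (S :\ u) v.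
Proof.
move=> uS; rewrite /eta_wronskian (eta_poly_rec w w1 gsym girr uS).
set e := eta (S :\ u); set s := \sum_(v in S :\ u | g u v) _.
have -> : \sum_(v in S :\ u | g u v) (`|w [set u; v]| ^+ 2)%:P *
     (eta (S :\ u :\ v) * e^`() - e * (eta (S :\ u :\ v))^`()) = s * e^`() - e * s^`().
  have -> : s^`() = \sum_(v in S :\ u | g u v)
      (`|w [set u; v]| ^+ 2)%:P * (eta (S :\ u :\ v))^`().
    by rewrite /s raddf_sum; apply: eq_bigr => v _; exact: deriv_mulC.
  rewrite mulr_suml mulr_sumr -sumrB; apply: eq_bigr => v _.
  by rewrite mulrBr mulrA mulrCA.
rewrite derivB derivM derivXsubC mul1r.
by move: (e^`()) (s^`()) ('X - _) => a b c; ring.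
Qed.

Lemma edge_weight_gt0 u v : g u v -> 0 < `|w [set u; v]| ^+ 2.
Proof. by move=> guv; rewrite exprn_gt0 // normr_gt0 w_neq0 // is_edge_set2. Qed.

Lemma eta_wronskian_germ (S : {set T}) u : u \in S ->
  (forall v, v \in S :\ u -> g u v -> nonneg_germ z (eta_wronskian (S :\ u) v)) ->
  exists2 l, (l <= 2 * mup z (eta (S :\ u)))%N & pos_germ z l (eta_wronskian S u).
Proof.
move=> uS nbr_germ; rewrite eta_wronskian_rec //; apply: pos_germD.
  exact: pos_germ_sqr (conj_real_complex _) (eta_poly_real _ _ _ _)
    (eta_poly_neq0 _ _ gsym girr _).
apply: nonneg_germ_sum => v /andP[vS' guv].
exact: nonneg_germZ (edge_weight_gt0 guv) (nbr_germ v vS' guv).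
Qed.

Lemma eta_wronskian_nonneg_germ (S : {set T}) u : u \in S ->
  nonneg_germ z (eta_wronskian S u).
Proof.
have [n] := ubnP #|S|; elim: n S u => // n IH S u /ltnSE-leSn uS.
have [v vS' _ | l _ germ] := eta_wronskian_germ uS; last by right; exists l.
by apply: IH vS'; move: leSn; rewrite (cardsD1 u S) uS.
Qed.

Lemma eta_poly_interlacing (S : {set T}) u : u \in S ->
  (mup z (eta S) <= (mup z (eta (S :\ u))).+1)%N.
Proof.
move=> uS; set k := mup z (eta (S :\ u)).
have [l le_l_2k germ] :=
  eta_wronskian_germ uS (fun v vS' _ => eta_wronskian_nonneg_germ vS').
have dvd_eta S' : ('X - z%:P) ^+ mup z (eta S') %| eta S'.
  by rewrite -mup_geq ?(eta_poly_neq0 _ _ gsym girr).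
case Em: (mup z (eta S)) => [//|m].
have : ('X - z%:P) ^+ (k + m) %| eta_wronskian S u.
  apply: dvdp_sub.
    have dvd_deriv_S := dvdp_deriv (dvd_eta S); rewrite Em /= in dvd_deriv_S.
    by rewrite exprD dvdp_mul ?dvd_eta.
  apply: dvdp_trans (dvdp_mul (dvd_eta S) (dvdp_deriv (dvd_eta (S :\ u)))).
  by rewrite -exprD dvdp_exp2l // Em -/k; lia.
rewrite -mup_geq ?(pos_germ_neq0 germ) // (mup_pos_germ germ) => le_km_l.
lia.
Qed.

End Interlacing.

Section Pendant.
Variables (R : rcfType) (T : finType) (g : rel T) (w : {set T} -> R[i]) (w1 : T -> R).
Variable theta : R.
Hypotheses (gsym : symmetric g) (girr : irreflexive g).
Hypothesis w_neq0 : forall e, is_edge g e -> w e != 0.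
Variables (S : {set T}) (u v : T).
Hypotheses (uS : u \in S) (vS : v \in S) (guv : g u v).
Hypothesis u_pendant : forall y, y \in S -> g u y -> y = v.
Local Notation eta := (eta_poly g w w1).
Local Notation Xu := ('X - (real_complex R (w1 u))%:P).

Let vu : v != u. Proof. by apply: contraTneq guv => ->; rewrite girr. Qed.

Lemma eta_poly_pendant :
  eta S = Xu * eta (S :\ u) - (`|w [set u; v]| ^+ 2)%:P * eta (S :\ u :\ v).
Proof.
rewrite {1}(eta_poly_rec w w1 gsym girr uS) (big_pred1 v) // => y.
rewrite !inE; apply/andP/eqP => [[/andP[_ yS] /(u_pendant yS)] // | ->].
by rewrite vu vS guv.
Qed.

Lemma eta_poly_pendant_nbr : eta (S :\ v) = Xu * eta (S :\ u :\ v).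
Proof.
have uSv : u \in S :\ v by rewrite !inE eq_sym vu uS.
rewrite (eta_poly_rec w w1 gsym girr uSv) big_pred0 => [|y]; last first.
  rewrite !inE; apply/negP => /andP[/and3P[_ yv yS] /(u_pendant yS) /eqP].
  by rewrite (negbTE yv).
by rewrite subr0 [S :\ v :\ u]setDDl [S :\ u :\ v]setDDl setUC.
Qed.

Lemma essential_pendant :
  essential g w w1 theta S v -> essential g w w1 theta S u.
Proof.
rewrite /essential /mult uS vS /=; set z := real_complex R theta.
set m := mup z (eta S); set k := mup z (eta (S :\ u)); set j := mup z (eta (S :\ u :\ v)).
move=> /eqP ess_v.
have eta_neq0 S' := eta_poly_neq0 w w1 gsym girr S'.
have lt_j_m : (j < m)%N.
  rewrite -ess_v eta_poly_pendant_nbr mupM ?polyXsubC_eq0 // addn1 ltnS.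
  exact: leq_addl.
have le_m_k1 : (m <= k.+1)%N := eta_poly_interlacing w1 theta gsym girr w_neq0 uS.
rewrite addn1 eqn_leq le_m_k1 andbT ltnNge; apply/negP => le_m_k.
have : ('X - z%:P) ^+ m %| (`|w [set u; v]| ^+ 2)%:P * eta (S :\ u :\ v).
  have -> : (`|w [set u; v]| ^+ 2)%:P * eta (S :\ u :\ v) = Xu * eta (S :\ u) - eta S.
    by rewrite eta_poly_pendant opprB addrC subrK.
  apply: dvdp_sub; last by rewrite -mup_geq.
  by apply: dvdp_mull; rewrite -mup_geq.
rewrite mul_polyC dvdpZr; last by rewrite expf_neq0 // normr_eq0 w_neq0 // is_edge_set2.
by rewrite -mup_geq // leqNgt lt_j_m.
Qed.

End Pendant.

Theorem lemma5p8 (R : rcfType) (T : finType) (g : rel T)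
    (w : {set T} -> R[i]) (w1 : T -> R) (theta : R) (u : T) :
  simple_graph g ->
  (forall e : {set T}, is_edge g e -> w e != 0%R) ->
  special g w w1 theta [set: T] u ->
  (2 <= degree g u)%N.
Proof.
case=> gsym girr w_neq0 /andP[/andP[uV u_ness] /exists_inP[v vV /andP[guv v_ess]]].
rewrite leqNgt; apply: contra u_ness => deg_lt2.
have u_pendant y : y \in [set: T] -> g u y -> y = v.
  move=> _ guy; move: deg_lt2; rewrite ltnS => /card_le1_eqP.
  by apply; rewrite inE.
exact: essential_pendant v_ess.
Qed.
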